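(* Over the family of 3-periodics of $E$: (i) the locus of the orthocenter $X_4$ (triangle center function $h=\dfrac{1}{s_1(s_2^2+s_3^2-s_1^2)}$), taken as the closure of its set of defined positions, is the ellipse $x^2/a_4^2+y^2/b_4^2=1$ with $a_4=k_4/a$, $b_4=k_4/b$, where $k_4=\dfrac{(a^2+b^2)\delta-2a^2b^2}{c^2}$; (ii) the locus of the Spieker center $X_{10}$ ($h=\dfrac{s_2+s_3}{s_1}$) is the ellipse $x^2/a_{10}^2+y^2/b_{10}^2=1$ with $a_{10}=k_{10}/a$, $b_{10}=k_{10}/b$, where $k_{10}=\dfrac{(a^2+b^2)\delta-a^4-b^4}{2c^2}$. In particular both loci are ellipses similar to a $90^\circ$-rotated copy of $E$.
   Context: Fix real numbers $a>b>0$, let $E$ be the ellipse $x^2/a^2+y^2/b^2=1$, $c^2=a^2-b^2$ and $\delta=\sqrt{a^4-a^2b^2+b^4}$. A 3-periodic is a non-degenerate triangle $P_1P_2P_3$ with all vertices on $E$ such that at each vertex $P_j$ the normal line to $E$ at $P_j$ bisects the interior angle of the triangle at $P_j$. For a triangle let $s_1=|P_2P_3|$, $s_2=|P_3P_1|$, $s_3=|P_1P_2|$. Given a triangle center function $h(s_1,s_2,s_3)$, the center $X_h$ is the point with trilinears $p:q:r=h(s_1,s_2,s_3):h(s_2,s_3,s_1):h(s_3,s_1,s_2)$, i.e. the Cartesian point $\dfrac{p s_1P_1+q s_2P_2+r s_3P_3}{p s_1+q s_2+r s_3}$ (equivalently, after clearing denominators in $p,q,r$ by a common factor). The locus of $X_h$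 is the set of points $X_h(T)$ over all 3-periodics $T$ for which it is defined. *)

From Stdlib Require Import Reals Lra.
Open Scope R_scope.

Definition pt := (R * R)%type.

Definition on_ellipse (a b : R) (P : pt) : Prop :=
  (fst P)^2 / a^2 + (snd P)^2 / b^2 = 1.

Definition dist (P Q : pt) : R :=
  sqrt ((fst P - fst Q)^2 + (snd P - snd Q)^2).

Definition cross (u v : pt) : R := fst u * snd v - snd u * fst v.

Definition vsub (P Q : pt) : pt := (fst P - fst Q, snd P - snd Q).

Definition nondegenerate (P1 P2 P3 : pt) : Prop :=
  cross (vsub P2 P1) (vsub P3 P1) <> 0.

(* direction of the interior angle bisector at P, for the triangle P Q S:
   sum of the unit vectors from P towards Q and towards S *)
Definition bisector_dir (P Q S : pt) : pt :=
  (fst (vsub Q P) / dist Q P + fst (vsub S P) / dist S P,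
   snd (vsub Q P) / dist Q P + snd (vsub S P) / dist S P).

Definition normal_dir (a b : R) (P : pt) : pt :=
  (fst P / a^2, snd P / b^2).

(* the normal line at P (through P) bisects the interior angle at P:
   the two lines through P are equal, i.e. their directions are parallel *)
Definition normal_bisects (a b : R) (P Q S : pt) : Prop :=
  cross (normal_dir a b P) (bisector_dir P Q S) = 0.

Definition three_periodic (a b : R) (P1 P2 P3 : pt) : Prop :=
  nondegenerate P1 P2 P3 /\
  on_ellipse a b P1 /\ on_ellipse a b P2 /\ on_ellipse a b P3 /\
  normal_bisects a b P1 P2 P3 /\ normal_bisects a b P2 P3 P1 /\
  normal_bisects a b P3 P1 P2.

(* A triangle center function h, together with its domain of definition
   hdom (the set of (s1,s2,s3) where the expression h is defined). *)
Section Center.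
Variables (h : R -> R -> R -> R) (hdom : R -> R -> R -> Prop).

Definition center_defined (P1 P2 P3 : pt) : Prop :=
  let s1 := dist P2 P3 in let s2 := dist P3 P1 in let s3 := dist P1 P2 in
  hdom s1 s2 s3 /\ hdom s2 s3 s1 /\ hdom s3 s1 s2 /\
  h s1 s2 s3 * s1 + h s2 s3 s1 * s2 + h s3 s1 s2 * s3 <> 0.

Definition center (P1 P2 P3 : pt) : pt :=
  let s1 := dist P2 P3 in let s2 := dist P3 P1 in let s3 := dist P1 P2 in
  let p := h s1 s2 s3 in let q := h s2 s3 s1 in let r := h s3 s1 s2 in
  let w := p * s1 + q * s2 + r * s3 in
  ((p * s1 * fst P1 + q * s2 * fst P2 + r * s3 * fst P3) / w,
   (p * s1 * snd P1 + q * s2 * snd P2 + r * s3 * snd P3) / w).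

Definition locus (a b : R) (X : pt) : Prop :=
  exists P1 P2 P3, three_periodic a b P1 P2 P3 /\
    center_defined P1 P2 P3 /\ X = center P1 P2 P3.
End Center.

Definition closure (S : pt -> Prop) (X : pt) : Prop :=
  forall eps, eps > 0 -> exists Y, S Y /\ dist X Y < eps.

Definition h4 (s1 s2 s3 : R) : R := 1 / (s1 * (s2^2 + s3^2 - s1^2)).
Definition h4_dom (s1 s2 s3 : R) : Prop := s1 * (s2^2 + s3^2 - s1^2) <> 0.

Definition h10 (s1 s2 s3 : R) : R := (s2 + s3) / s1.
Definition h10_dom (s1 s2 s3 : R) : Prop := s1 <> 0.

Definition delta (a b : R) : R := sqrt (a^4 - a^2*b^2 + b^4).
Definition csq (a b : R) : R := a^2 - b^2.
Definition k4 (a b : R) : R := ((a^2 + b^2) * delta a b - 2 * a^2 * b^2) / csq a b.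
Definition k10 (a b : R) : R := ((a^2 + b^2) * delta a b - a^4 - b^4) / (2 * csq a b).

(* Write the vertices of a 3-periodic as [P_i = (a x_i, b y_i)] with [z_i = x_i + i y_i] on the
   unit circle. The normal at [P_i] bisects the angle iff it has equal components along the two
   unit sides, i.e. iff [1 - <z_i, z_j>] is proportional to [|P_i P_j|], with one constant [K] for
   the whole triangle. Joachimsthal's identity turns this into a symmetric biquadratic relation
   between [z_i] and [z_j]; three distinct solutions of it are exactly the roots of
   [z^3 + p s z^2 - p z - s] with [s = z1 z2 z3], and [p = K^2 (a^2 - b^2)] is forced to be [p0].
   Conversely, every unimodular [s] yields three distinct unimodular roots (sign changes of a
   phase function), hence a 3-periodic. The Spieker center and, unless the triangle is
   right-angled, the orthocenter are symmetric functions of the roots and equal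
   [(-(k/a) Re s, -(k/b) Im s)] with [k = k10], resp. [k4]. A right-angled 3-periodic has its
   orthocenter at a vertex, on the billiard ellipse, which happens only where [cos^2 (arg s)]
   takes one particular value; such parameters are isolated, so the closure is the whole ellipse. *)

From Stdlib Require Import Reals Lra Nsatz Classical.
From Coquelicot Require Import Coquelicot.
Open Scope R_scope.

Section Constants.
Variables (a b : R).
Hypotheses (hb : 0 < b) (hab : b < a).

Lemma csq_pos : 0 < a^2 - b^2.
Proof. nra. Qed.

Lemma delta_sq : delta a b ^ 2 = a^4 - a^2*b^2 + b^4.
Proof.
  unfold delta. rewrite pow2_sqrt; [ring|].
  replace (a^4 - a^2*b^2 + b^4) with ((a^2-b^2)^2 + (a*b)^2) by ring. nra.
Qed.

Lemma delta_ge0 : 0 <= delta a b.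
Proof. apply sqrt_pos. Qed.

(* The common value of [K^2 (a^2 - b^2)] over all 3-periodics, where [K] is the ratio of
   [1 - <u_i, u_j>] to the side [|P_i P_j|], for vertices [P_i = (a x_i, b y_i)] and unit
   vectors [u_i = (x_i, y_i)]. *)
Definition p0 : R := (2 * delta a b - a^2 - b^2) / (a^2 - b^2).

Lemma delta_p0 : 2 * delta a b = p0 * (a^2 - b^2) + a^2 + b^2.
Proof. unfold p0. field. generalize csq_pos; lra. Qed.

Lemma p0_quad : (a^2-b^2) * p0^2 + 2 * (a^2+b^2) * p0 - 3 * (a^2-b^2) = 0.
Proof.
  generalize delta_sq delta_p0 csq_pos; intros Hd Hp Hc.
  apply Rmult_eq_reg_l with (a^2-b^2); [|lra].
  transitivity ((p0 * (a^2-b^2) + a^2 + b^2)^2 - 4 * delta a b ^ 2); [rewrite Hd; ring|].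
  rewrite <- Hp. ring.
Qed.

Lemma p0_bounds : 0 < p0 < 1.
Proof.
  generalize delta_sq delta_ge0 csq_pos; intros Hd Hd0 Hc. unfold p0.
  assert (Hb2 : 0 < b^2) by nra.
  split.
  - apply Rdiv_lt_0_compat; nra.
  - apply Rmult_lt_reg_r with (a^2-b^2); [lra|]. unfold Rdiv. rewrite Rmult_assoc, Rinv_l; nra.
Qed.

Lemma p0_sq_a : 4 * p0 * a^2 = (a^2-b^2) * (3-p0) * (1+p0).
Proof. generalize p0_quad; nra. Qed.

Lemma p0_sq_b : 4 * p0 * b^2 = (a^2-b^2) * (3+p0) * (1-p0).
Proof. generalize p0_quad; nra. Qed.

Lemma p0_unique (p : R) : 0 < p -> (a^2-b^2) * p^2 + 2 * (a^2+b^2) * p - 3 * (a^2-b^2) = 0 -> p = p0.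
Proof.
  intros hp Hq. generalize p0_quad p0_bounds csq_pos; intros H0 Hb Hc.
  assert (Hf : (p - p0) * ((a^2-b^2) * (p + p0) + 2 * (a^2+b^2)) = 0).
  { transitivity (((a^2-b^2) * p^2 + 2 * (a^2+b^2) * p - 3 * (a^2-b^2))
      - ((a^2-b^2) * p0^2 + 2 * (a^2+b^2) * p0 - 3 * (a^2-b^2))); [ring|rewrite Hq, H0; ring]. }
  apply Rmult_integral in Hf as [Hf|Hf]; [lra|nra].
Qed.

Lemma k4_p0 : k4 a b = (a^2-b^2) * (5 - p0^2) / 4.
Proof.
  unfold k4, csq. generalize delta_p0 p0_quad csq_pos p0_bounds; intros H1 H2 H3 H4.
  replace (delta a b) with ((p0 * (a^2-b^2) + a^2 + b^2) / 2) by lra.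
  apply Rmult_eq_reg_l with (4 * p0 * (a^2-b^2)); [|nra].
  field_simplify; [nra|lra].
Qed.

Lemma k10_p0 : k10 a b = (a^2-b^2) * (1 - p0^2) / 8.
Proof.
  unfold k10, csq. generalize delta_p0 p0_quad csq_pos p0_bounds; intros H1 H2 H3 H4.
  replace (delta a b) with ((p0 * (a^2-b^2) + a^2 + b^2) / 2) by lra.
  apply Rmult_eq_reg_l with (8 * p0 * (a^2-b^2)); [|nra].
  field_simplify; [nra|lra].
Qed.

Lemma k4_pos : 0 < k4 a b.
Proof.
  rewrite k4_p0. generalize csq_pos p0_bounds; intros.
  apply Rdiv_lt_0_compat; [apply Rmult_lt_0_compat|]; nra.
Qed.

Lemma k10_pos : 0 < k10 a b.
Proof.
  rewrite k10_p0. generalize csq_pos p0_bounds; intros.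
  apply Rdiv_lt_0_compat; [apply Rmult_lt_0_compat|]; nra.
Qed.

Lemma spieker_coef_a : a^2 * ((p0^3 - 3*p0 + 2*p0^2) / (2 * (9 - p0^2))) = - k10 a b.
Proof.
  rewrite k10_p0. generalize p0_sq_a p0_bounds; intros Ha Hp.
  apply Rmult_eq_reg_l with (8 * (3 - p0)); [|lra].
  transitivity (4 * p0 * a^2 * (p0 - 1)); [field; nra|]. rewrite Ha. field.
Qed.

Lemma spieker_coef_b : b^2 * ((p0^3 - 3*p0 - 2*p0^2) / (2 * (9 - p0^2))) = - k10 a b.
Proof.
  rewrite k10_p0. generalize p0_sq_b p0_bounds; intros Hb Hp.
  apply Rmult_eq_reg_l with (8 * (3 + p0)); [|lra].
  transitivity (- (4 * p0 * b^2 * (p0 + 1))); [field; nra|]. rewrite Hb. field.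
Qed.

End Constants.

Definition dot (u v : pt) : R := fst u * fst v + snd u * snd v.
Definition on_circle (u : pt) : Prop := dot u u = 1.
Definition stretch (a b : R) (u : pt) : pt := (a * fst u, b * snd u).
Definition vers (u v : pt) : R := 1 - dot u v.

Lemma dot_comm (u v : pt) : dot u v = dot v u.
Proof. unfold dot. ring. Qed.

Lemma vers_comm (u v : pt) : vers u v = vers v u.
Proof. unfold vers. rewrite dot_comm. reflexivity. Qed.

Lemma dist_sq (P Q : pt) : dist P Q ^ 2 = dot (vsub P Q) (vsub P Q).
Proof.
  unfold dist, dot, vsub. rewrite pow2_sqrt; simpl; [ring|].
  generalize (pow2_ge_0 (fst P - fst Q)) (pow2_ge_0 (snd P - snd Q)); simpl; lra.
Qed.

Lemma dist_sym (P Q : pt) : dist P Q = dist Q P.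
Proof. unfold dist. f_equal. ring. Qed.

Lemma dist_pos (P Q : pt) : P <> Q -> 0 < dist P Q.
Proof.
  intros hPQ. apply sqrt_lt_R0. destruct P as [x y], Q as [x' y']; simpl.
  destruct (Req_dec x x'); destruct (Req_dec y y'); [congruence| | |]; nra.
Qed.

Lemma dist_eq_sqrt (P Q : pt) (r : R) : 0 <= r -> r ^ 2 = dot (vsub P Q) (vsub P Q) -> dist P Q = r.
Proof.
  intros hr Hr. unfold dist. rewrite <- (sqrt_pow2 r hr). f_equal. rewrite Hr. unfold dot; simpl; ring.
Qed.

Lemma cross_sum_unit_iff (n u v : pt) : on_circle u -> on_circle v -> cross u v <> 0 ->
  cross n (fst u + fst v, snd u + snd v) = 0 <-> dot n u = dot n v.
Proof.
  destruct n as [n1 n2], u as [u1 u2], v as [v1 v2].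
  unfold on_circle, cross, dot; simpl. intros hu hv huv.
  assert (Hwd : (u1*u1+u2*u2) - (v1*v1+v2*v2) = 0) by lra.
  (* Lagrange's identity |w|^2 (n.d) = (w.d)(w.n) + (w x d)(w x n), for w = u + v and d = u - v *)
  assert (E : ((u1+v1)^2 + (u2+v2)^2) * ((n1*u1 + n2*u2) - (n1*v1 + n2*v2))
              = 2 * (u1*v2 - u2*v1) * (n1 * (u2+v2) - n2 * (u1+v1))).
  { apply Rminus_diag_uniq.
    transitivity (((u1*u1+u2*u2) - (v1*v1+v2*v2)) * ((u1+v1)*n1 + (u2+v2)*n2)); [ring|rewrite Hwd; ring]. }
  assert (Hw : ((u1+v1)^2 + (u2+v2)^2) * ((u1-v1)^2 + (u2-v2)^2) = 4 * (u1*v2 - u2*v1)^2).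
  { apply Rminus_diag_uniq. transitivity (((u1*u1+u2*u2) - (v1*v1+v2*v2))^2); [ring|rewrite Hwd; ring]. }
  assert (Hw0 : (u1+v1)^2 + (u2+v2)^2 <> 0).
  { intro H0. rewrite H0, Rmult_0_l in Hw. apply huv. nra. }
  split; intro H.
  - rewrite H, Rmult_0_r in E. apply Rmult_integral in E as [E|E]; [contradiction|lra].
  - rewrite H, Rminus_diag_eq, Rmult_0_r in E by reflexivity.
    symmetry in E. apply Rmult_integral in E as [E|E]; [|lra]. exfalso. apply huv. lra.
Qed.

Lemma normal_bisects_iff (n P Q S : pt) : cross (vsub Q P) (vsub S P) <> 0 ->
  cross n (bisector_dir P Q S) = 0 <->
  dot n (vsub Q P) * dist S P = dot n (vsub S P) * dist Q P.
Proof.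
  intros hc.
  assert (hQ : 0 < dist Q P).
  { apply dist_pos. intros ->. apply hc. unfold cross, vsub; simpl; ring. }
  assert (hS : 0 < dist S P).
  { apply dist_pos. intros ->. apply hc. unfold cross, vsub; simpl; ring. }
  generalize (dist_sq Q P) (dist_sq S P).
  unfold bisector_dir, on_circle, cross, dot in *.
  destruct (vsub Q P) as [U1 U2], (vsub S P) as [V1 V2]; simpl in *.
  set (dU := dist Q P) in *. set (dV := dist S P) in *. intros eU eV.
  rewrite (cross_sum_unit_iff n (U1/dU, U2/dU) (V1/dV, V2/dV)); unfold on_circle, cross, dot; simpl.
  - split; intro H.
    + apply Rmult_eq_reg_r with (/ (dU * dV)); [|apply Rinv_neq_0_compat; nra].
      transitivity (fst n * (U1/dU) + snd n * (U2/dU)); [field; lra|].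
      rewrite H. field. lra.
    + transitivity ((fst n * U1 + snd n * U2) * dV / (dU * dV)); [field; lra|].
      rewrite H. field. lra.
  - transitivity ((U1*U1 + U2*U2) / dU^2); [field; lra|]. rewrite <- eU. field. lra.
  - transitivity ((V1*V1 + V2*V2) / dV^2); [field; lra|]. rewrite <- eV. field. lra.
  - intro H. apply hc. transitivity ((U1/dU * (V2/dV) - U2/dU * (V1/dV)) * (dU * dV)); [field; lra|].
    rewrite H. ring.
Qed.

Lemma on_ellipse_stretch (a b : R) (u : pt) : 0 < a -> 0 < b ->
  on_ellipse a b (stretch a b u) <-> on_circle u.
Proof.
  intros ha hb. unfold on_ellipse, on_circle, stretch, dot. cbn [fst snd].
  replace ((a * fst u)^2 / a^2 + (b * snd u)^2 / b^2) with (fst u * fst u + snd u * snd u)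
    by (field; lra). tauto.
Qed.

Lemma ellipse_stretch (a b : R) (P : pt) : 0 < a -> 0 < b -> on_ellipse a b P ->
  exists u, on_circle u /\ P = stretch a b u.
Proof.
  intros ha hb HP. exists (fst P / a, snd P / b). split.
  - apply (on_ellipse_stretch a b); auto. unfold stretch; simpl.
    replace (a * (fst P / a)) with (fst P) by (field; lra).
    replace (b * (snd P / b)) with (snd P) by (field; lra). destruct P; exact HP.
  - destruct P as [x y]. unfold stretch; simpl. f_equal; field; lra.
Qed.

Lemma vers_pos (u v : pt) : on_circle u -> on_circle v -> u <> v -> 0 < vers u v.
Proof.
  destruct u as [x1 y1], v as [x2 y2]. unfold on_circle, vers, dot; simpl. intros h1 h2 huv.
  destruct (Req_dec x1 x2); destruct (Req_dec y1 y2); [congruence| | |]; nra.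
Qed.

Lemma nondegenerate_rot (P1 P2 P3 : pt) : nondegenerate P1 P2 P3 -> nondegenerate P2 P3 P1.
Proof. unfold nondegenerate, cross, vsub; simpl. intros H E. apply H. rewrite <- E. ring. Qed.

Lemma nondegenerate_distinct (P1 P2 P3 : pt) :
  nondegenerate P1 P2 P3 -> P1 <> P2 /\ P1 <> P3 /\ P2 <> P3.
Proof.
  unfold nondegenerate, cross, vsub. intros H.
  repeat split; intros E; apply H; rewrite E; simpl; ring.
Qed.

Lemma cross_sq_inscribed (x1 y1 x2 y2 x3 y3 : R) :
  x1*x1 + y1*y1 = 1 -> x2*x2 + y2*y2 = 1 -> x3*x3 + y3*y3 = 1 ->
  ((x2-x1)*(y3-y1) - (y2-y1)*(x3-x1))^2
  = 2 * (1 - (x1*x2 + y1*y2)) * (1 - (x1*x3 + y1*y3)) * (1 - (x2*x3 + y2*y3)).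
Proof. intros. cbv beta iota delta [pow] in *. nsatz. Qed.

Lemma nondegenerate_stretch (a b : R) (u1 u2 u3 : pt) : a <> 0 -> b <> 0 ->
  on_circle u1 -> on_circle u2 -> on_circle u3 -> u1 <> u2 -> u1 <> u3 -> u2 <> u3 ->
  nondegenerate (stretch a b u1) (stretch a b u2) (stretch a b u3).
Proof.
  intros ha hb h1 h2 h3 d12 d13 d23.
  generalize (vers_pos _ _ h1 h2 d12) (vers_pos _ _ h1 h3 d13) (vers_pos _ _ h2 h3 d23).
  revert h1 h2 h3. destruct u1 as [x1 y1], u2 as [x2 y2], u3 as [x3 y3].
  unfold nondegenerate, on_circle, vers, stretch, cross, vsub, dot; simpl.
  intros h1 h2 h3 v12 v13 v23 E.
  assert (Hc : (x2-x1)*(y3-y1) - (y2-y1)*(x3-x1) = 0).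
  { apply Rmult_eq_reg_l with (a * b); [|apply Rmult_integral_contrapositive; auto].
    rewrite Rmult_0_r, <- E. ring. }
  generalize (cross_sq_inscribed _ _ _ _ _ _ h1 h2 h3). rewrite Hc. intro Hp.
  assert (0 < (1 - (x1*x2 + y1*y2)) * (1 - (x1*x3 + y1*y3)) * (1 - (x2*x3 + y2*y3)))
    by (repeat apply Rmult_lt_0_compat; auto). lra.
Qed.

Lemma dot_normal_stretch (a b : R) (u v : pt) : 0 < a -> 0 < b -> on_circle u ->
  dot (normal_dir a b (stretch a b u)) (vsub (stretch a b v) (stretch a b u)) = - vers u v.
Proof.
  intros ha hb hu. unfold on_circle, vers, dot, normal_dir, stretch, vsub in *; simpl in *.
  transitivity (fst u * fst v + snd u * snd v - (fst u * fst u + snd u * snd u)); [field; lra|].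
  rewrite hu. ring.
Qed.

Lemma normal_bisects_stretch (a b : R) (u1 u2 u3 : pt) : 0 < a -> 0 < b -> on_circle u1 ->
  nondegenerate (stretch a b u1) (stretch a b u2) (stretch a b u3) ->
  normal_bisects a b (stretch a b u1) (stretch a b u2) (stretch a b u3) <->
  vers u1 u2 * dist (stretch a b u3) (stretch a b u1)
  = vers u1 u3 * dist (stretch a b u2) (stretch a b u1).
Proof.
  intros ha hb h1 hnd. unfold normal_bisects.
  rewrite normal_bisects_iff by exact hnd.
  rewrite !dot_normal_stretch by auto. lra.
Qed.

Definition chord_rel (p q : R) (u v : pt) : R :=
  (1 - p) * fst u * fst v + (1 + p) * snd u * snd v - q.

(* Joachimsthal's identity for chords of an ellipse, in the coordinates of the circle. *)
Lemma dist_stretch_iff (a b K : R) (u v : pt) : on_circle u -> on_circle v -> u <> v -> 0 < K ->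
  dist (stretch a b u) (stretch a b v) = vers u v / K <->
  chord_rel (K^2 * (a^2 - b^2)) (1 - K^2 * (a^2 + b^2)) u v = 0.
Proof.
  intros hu hv huv hK. generalize (vers_pos u v hu hv huv). intro hm.
  assert (J : vers u v ^ 2
              - K^2 * dot (vsub (stretch a b u) (stretch a b v)) (vsub (stretch a b u) (stretch a b v))
              = - vers u v * chord_rel (K^2 * (a^2 - b^2)) (1 - K^2 * (a^2 + b^2)) u v).
  { revert hu hv. destruct u as [x1 y1], v as [x2 y2].
    unfold on_circle, vers, chord_rel, stretch, vsub, dot; simpl. intros. nsatz. }
  split; intro H.
  - rewrite <- dist_sq, H in J.
    replace (vers u v ^ 2 - K^2 * (vers u v / K)^2) with 0 in J by (field; lra).
    symmetry in J. apply Rmult_integral in J as [J|J]; lra.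
  - apply dist_eq_sqrt; [apply Rlt_le, Rdiv_lt_0_compat; auto|].
    rewrite H, Rmult_0_r in J.
    apply Rmult_eq_reg_l with (K^2); [|apply pow_nonzero; lra].
    transitivity (vers u v ^ 2); [field; lra|lra].
Qed.

Lemma Cmult_eq0_l (x y : C) : (x * y = 0)%C -> y <> 0%C -> x = 0%C.
Proof. intros H Hy. replace x with (x * y / y)%C by (field; auto). rewrite H. field. auto. Qed.

Lemma Cminus_neq0 (x y : C) : x <> y -> (x - y)%C <> 0%C.
Proof. intros H E. apply H. replace x with ((x - y) + y)%C by ring. rewrite E. ring. Qed.

Lemma on_circle_neq0 (z : C) : on_circle z -> z <> 0%C.
Proof. unfold on_circle, dot. intros H E. rewrite E in H. simpl in H. lra. Qed.

Definition sym_biquad (p q : R) (z w : C) : C :=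
  (z*z + w*w - p*(z*z)*(w*w) - p - 2*q*z*w)%C.

Lemma sym_biquad_comm (p q : R) (z w : C) : sym_biquad p q z w = sym_biquad p q w z.
Proof. unfold sym_biquad. ring. Qed.

Lemma sym_biquad_unit (p q : R) (z w : C) : on_circle z -> on_circle w ->
  sym_biquad p q z w = (2 * z * w * chord_rel p q z w)%C.
Proof.
  destruct z as [x1 y1], w as [x2 y2]. unfold on_circle, dot, sym_biquad, chord_rel; simpl.
  intros. apply injective_projections; simpl; nsatz.
Qed.

Lemma sym_biquad_eq0_iff (p q : R) (z w : C) : on_circle z -> on_circle w ->
  sym_biquad p q z w = 0%C <-> chord_rel p q z w = 0.
Proof.
  intros hz hw. rewrite sym_biquad_unit by auto.
  assert (Hzw : (2 * z * w)%C <> 0%C).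
  { apply Cmult_neq_0; [apply Cmult_neq_0|]; try (apply on_circle_neq0; assumption).
    intro E. apply (f_equal fst) in E. simpl in E. lra. }
  split; intro H.
  - apply RtoC_inj. apply (Cmult_eq0_l _ (2 * z * w)); [rewrite <- H; ring|exact Hzw].
  - rewrite H. ring.
Qed.

(* Vieta for [sym_biquad p q z w], a quadratic in [w]: [(1 - p z^2) w^2 - 2 q z w + (z^2 - p)]. *)
Lemma sym_biquad_partners (p q : R) (z w w' : C) : w <> w' ->
  sym_biquad p q z w = 0%C -> sym_biquad p q z w' = 0%C ->
  ((1 - p*(z*z)) * (w + w') = 2*q*z)%C /\ ((1 - p*(z*z)) * (w * w') = z*z - p)%C.
Proof.
  unfold sym_biquad. intros hw Q Q'.
  assert (S : ((1 - p*(z*z)) * (w + w') - 2*q*z = 0)%C).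
  { apply (Cmult_eq0_l _ (w - w')); [|apply Cminus_neq0; auto].
    transitivity ((z*z + w*w - p*(z*z)*(w*w) - p - 2*q*z*w)
                  - (z*z + w'*w' - p*(z*z)*(w'*w') - p - 2*q*z*w'))%C; [ring|rewrite Q, Q'; ring]. }
  split.
  - transitivity (((1 - p*(z*z)) * (w + w') - 2*q*z) + 2*q*z)%C; [ring|rewrite S; ring].
  - transitivity (w' * ((1 - p*(z*z)) * (w + w') - 2*q*z)
                  - (z*z + w'*w' - p*(z*z)*(w'*w') - p - 2*q*z*w') + (z*z - p))%C;
      [ring|rewrite S, Q'; ring].
Qed.

Lemma vieta_cubic (A B D z1 z2 z3 : C) : z1 <> z2 -> z1 <> z3 -> z2 <> z3 ->
  (z1*z1*z1 + A*(z1*z1) + B*z1 + D = 0)%C ->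
  (z2*z2*z2 + A*(z2*z2) + B*z2 + D = 0)%C ->
  (z3*z3*z3 + A*(z3*z3) + B*z3 + D = 0)%C ->
  (z1+z2+z3 = -A)%C /\ (z1*z2+z2*z3+z3*z1 = B)%C /\ (z1*z2*z3 = -D)%C.
Proof.
  intros h12 h13 h23 c1 c2 c3.
  assert (G12 : (z1*z1+z1*z2+z2*z2 + A*(z1+z2) + B = 0)%C).
  { apply (Cmult_eq0_l _ (z1 - z2)); [|apply Cminus_neq0; auto].
    transitivity ((z1*z1*z1 + A*(z1*z1) + B*z1 + D) - (z2*z2*z2 + A*(z2*z2) + B*z2 + D))%C;
      [ring|rewrite c1, c2; ring]. }
  assert (G13 : (z1*z1+z1*z3+z3*z3 + A*(z1+z3) + B = 0)%C).
  { apply (Cmult_eq0_l _ (z1 - z3)); [|apply Cminus_neq0; auto].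
    transitivity ((z1*z1*z1 + A*(z1*z1) + B*z1 + D) - (z3*z3*z3 + A*(z3*z3) + B*z3 + D))%C;
      [ring|rewrite c1, c3; ring]. }
  assert (S1 : (z1+z2+z3 + A = 0)%C).
  { apply (Cmult_eq0_l _ (z2 - z3)); [|apply Cminus_neq0; auto].
    transitivity ((z1*z1+z1*z2+z2*z2 + A*(z1+z2) + B) - (z1*z1+z1*z3+z3*z3 + A*(z1+z3) + B))%C;
      [ring|rewrite G12, G13; ring]. }
  assert (S2 : (z1*z2+z2*z3+z3*z1 - B = 0)%C).
  { transitivity (-(z1*z1+z1*z2+z2*z2 + A*(z1+z2) + B) + (z1+z2)*(z1+z2+z3 + A))%C;
      [ring|rewrite G12, S1; ring]. }
  assert (S3 : (z1*z2*z3 + D = 0)%C).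
  { transitivity ((z1*z1*z1 + A*(z1*z1) + B*z1 + D) - (z1*z1)*(z1+z2+z3 + A)
                  + z1*(z1*z2+z2*z3+z3*z1 - B))%C; [ring|rewrite c1, S1, S2; ring]. }
  repeat split.
  - transitivity (z1+z2+z3 + A - A)%C; [ring|rewrite S1; ring].
  - transitivity (z1*z2+z2*z3+z3*z1 - B + B)%C; [ring|rewrite S2; ring].
  - transitivity (z1*z2*z3 + D - D)%C; [ring|rewrite S3; ring].
Qed.

Lemma root_of_partners (p : R) (z P : C) : ((1 - p*(z*z)) * P = z*z - p)%C ->
  (z*z*z + (p*(z*P))*(z*z) + (-p)*z + -(z*P) = 0)%C.
Proof.
  intros H. transitivity (z * ((z*z - p) - (1 - p*(z*z)) * P))%C; [ring|rewrite H; ring].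
Qed.

(* Multiplying the product relations by [z_i] shows that the [z_i] are the three roots of
   [z^3 + p s z^2 - p z - s], [s = z1 z2 z3]; the sum relation then pins down [q]. *)
Lemma sym_biquad_vieta (p q : R) (z1 z2 z3 : C) : z1 <> 0%C ->
  z1 <> z2 -> z1 <> z3 -> z2 <> z3 ->
  sym_biquad p q z1 z2 = 0%C -> sym_biquad p q z1 z3 = 0%C -> sym_biquad p q z2 z3 = 0%C ->
  (z1 + z2 + z3 = - p * (z1 * z2 * z3))%C /\ (z1 * z2 + z2 * z3 + z3 * z1 = - p)%C /\
  2 * q = p^2 - 1.
Proof.
  intros h0 h12 h13 h23 Q12 Q13 Q23.
  assert (Q21 : sym_biquad p q z2 z1 = 0%C) by (rewrite sym_biquad_comm; exact Q12).
  assert (Q31 : sym_biquad p q z3 z1 = 0%C) by (rewrite sym_biquad_comm; exact Q13).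
  assert (Q32 : sym_biquad p q z3 z2 = 0%C) by (rewrite sym_biquad_comm; exact Q23).
  destruct (sym_biquad_partners p q z1 z2 z3 h23 Q12 Q13) as [E1 F1].
  destruct (sym_biquad_partners p q z2 z1 z3 h13 Q21 Q23) as [_ F2].
  destruct (sym_biquad_partners p q z3 z1 z2 h12 Q31 Q32) as [_ F3].
  generalize (root_of_partners _ _ _ F1) (root_of_partners _ _ _ F2) (root_of_partners _ _ _ F3).
  replace (z2 * (z1 * z3))%C with (z1 * (z2 * z3))%C by ring.
  replace (z3 * (z1 * z2))%C with (z1 * (z2 * z3))%C by ring.
  intros C1 C2 C3.
  destruct (vieta_cubic _ _ _ _ _ _ h12 h13 h23 C1 C2 C3) as (S1 & S2 & _).
  assert (Hq : ((2*q - (p^2 - 1)) * z1 = 0)%C).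
  { transitivity ((1 - p*(z1*z1)) * (z1 + z2 + z3 + p * (z1 * (z2 * z3)))
                  - ((1 - p*(z1*z1)) * (z2 + z3) - 2*q*z1)
                  - p * z1 * ((1 - p*(z1*z1)) * (z2 * z3) - (z1*z1 - p)))%C; [ring|].
    rewrite E1, F1, S1. ring. }
  apply Cmult_eq0_l in Hq; [|exact h0].
  repeat split.
  - rewrite S1. ring.
  - rewrite S2. ring.
  - apply RtoC_inj. rewrite RtoC_mult, RtoC_minus, RtoC_pow.
    transitivity ((2*q - (p^2 - 1)) + (p^2 - 1))%C; [ring|rewrite Hq; ring].
Qed.

Lemma sym_biquad_of_vieta (p q : R) (z1 z2 z3 : C) : 2 * q = p^2 - 1 ->
  (z1 + z2 + z3 = - p * (z1 * z2 * z3))%C -> (z1 * z2 + z2 * z3 + z3 * z1 = - p)%C ->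
  sym_biquad p q z1 z2 = 0%C.
Proof.
  intros hq S1 S2. unfold sym_biquad.
  assert (Hq : (2*q - (p^2 - 1) = 0)%C).
  { apply (f_equal RtoC) in hq. rewrite RtoC_mult, RtoC_minus, RtoC_pow in hq. rewrite hq. ring. }
  assert (S1' : (z1 + z2 + z3 + p * (z1 * z2 * z3) = 0)%C) by (rewrite S1; ring).
  assert (S2' : (z1 * z2 + z2 * z3 + z3 * z1 + p = 0)%C) by (rewrite S2; ring).
  transitivity (- (p*(z1*z2) + 1) * ((z1*z2 + z2*z3 + z3*z1 + p) - z3 * (z1 + z2 + z3 + p*(z1*z2*z3)))
                + (z1 + z2 + z3 + p*(z1*z2*z3)) * (z1 + z2 - z3*(p*(z1*z2) + 1))
                - (2*q - (p^2 - 1)) * (z1*z2))%C; [ring|].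
  rewrite S1', S2', Hq. ring.
Qed.

Definition billiard_roots (a b : R) (z1 z2 z3 : C) : Prop :=
  on_circle z1 /\ on_circle z2 /\ on_circle z3 /\ z1 <> z2 /\ z1 <> z3 /\ z2 <> z3 /\
  (z1 + z2 + z3 = - p0 a b * (z1 * z2 * z3))%C /\ (z1 * z2 + z2 * z3 + z3 * z1 = - p0 a b)%C.

Lemma billiard_roots_rot (a b : R) (z1 z2 z3 : C) :
  billiard_roots a b z1 z2 z3 -> billiard_roots a b z2 z3 z1.
Proof.
  intros (h1 & h2 & h3 & d12 & d13 & d23 & S1 & S2).
  repeat split; auto.
  - transitivity (z1 + z2 + z3)%C; [ring|rewrite S1; ring].
  - rewrite <- S2. ring.
Qed.

Lemma common_ratio (v12 v13 v23 d12 d13 d23 : R) : 0 < v12 -> 0 < d12 ->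
  v12 * d13 = v13 * d12 -> v23 * d12 = v12 * d23 ->
  exists K, 0 < K /\ d12 = v12 / K /\ d13 = v13 / K /\ d23 = v23 / K.
Proof.
  intros hv hd E1 E2. exists (v12 / d12). repeat split.
  - apply Rdiv_lt_0_compat; auto.
  - field. lra.
  - apply Rmult_eq_reg_l with v12; [rewrite E1; field|]; lra.
  - apply Rmult_eq_reg_l with v12; [rewrite <- E2; field|]; lra.
Qed.

Section Periodics.
Variables (a b : R).
Hypotheses (hb : 0 < b) (hab : b < a).

Let ha : 0 < a.
Proof. lra. Qed.

Lemma periodic_common_ratio (u1 u2 u3 : pt) :
  on_circle u1 -> on_circle u2 -> on_circle u3 ->
  three_periodic a b (stretch a b u1) (stretch a b u2) (stretch a b u3) ->
  exists K, 0 < K /\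
    dist (stretch a b u1) (stretch a b u2) = vers u1 u2 / K /\
    dist (stretch a b u1) (stretch a b u3) = vers u1 u3 / K /\
    dist (stretch a b u2) (stretch a b u3) = vers u2 u3 / K.
Proof.
  intros h1 h2 h3 (hnd & _ & _ & _ & B1 & B2 & _).
  destruct (nondegenerate_distinct _ _ _ hnd) as (n12 & _).
  apply normal_bisects_stretch in B1; auto.
  apply normal_bisects_stretch in B2; auto; [|apply nondegenerate_rot; exact hnd].
  assert (d12 : u1 <> u2) by (intros ->; auto).
  apply common_ratio; auto.
  - apply vers_pos; auto.
  - apply dist_pos. exact n12.
  - rewrite (dist_sym (stretch a b u1) (stretch a b u3)), (dist_sym (stretch a b u1)).
    exact B1.
  - rewrite (dist_sym (stretch a b u3) (stretch a b u2)), (vers_comm u2 u1) in B2. lra.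
Qed.

Lemma billiard_roots_of_periodic (P1 P2 P3 : pt) : three_periodic a b P1 P2 P3 ->
  exists z1 z2 z3, billiard_roots a b z1 z2 z3 /\
    P1 = stretch a b z1 /\ P2 = stretch a b z2 /\ P3 = stretch a b z3.
Proof.
  intros T. pose proof T as (hnd & e1 & e2 & e3 & _).
  destruct (ellipse_stretch a b P1 ha hb e1) as (z1 & h1 & ->).
  destruct (ellipse_stretch a b P2 ha hb e2) as (z2 & h2 & ->).
  destruct (ellipse_stretch a b P3 ha hb e3) as (z3 & h3 & ->).
  destruct (nondegenerate_distinct _ _ _ hnd) as (n12 & n13 & n23).
  assert (d12 : z1 <> z2) by (intros ->; auto).
  assert (d13 : z1 <> z3) by (intros ->; auto).
  assert (d23 : z2 <> z3) by (intros ->; auto).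
  destruct (periodic_common_ratio z1 z2 z3 h1 h2 h3 T) as (K & hK & D12 & D13 & D23).
  apply dist_stretch_iff, (sym_biquad_eq0_iff _ _ _ _ h1 h2) in D12; auto.
  apply dist_stretch_iff, (sym_biquad_eq0_iff _ _ _ _ h1 h3) in D13; auto.
  apply dist_stretch_iff, (sym_biquad_eq0_iff _ _ _ _ h2 h3) in D23; auto.
  destruct (sym_biquad_vieta _ _ z1 z2 z3 (on_circle_neq0 _ h1) d12 d13 d23 D12 D13 D23)
    as (S1 & S2 & Hq).
  assert (Hp : K^2 * (a^2 - b^2) = p0 a b).
  { apply p0_unique; auto.
    - apply Rmult_lt_0_compat; [apply pow_lt; lra|apply csq_pos; auto].
    - transitivity ((a^2 - b^2) * ((K^2 * (a^2 - b^2))^2 - 1 - 2 * (1 - K^2 * (a^2 + b^2))));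
        [ring|rewrite Hq; ring]. }
  rewrite Hp in S1, S2.
  exists z1, z2, z3. repeat split; auto.
Qed.

Lemma billiard_chord (z1 z2 z3 : C) : billiard_roots a b z1 z2 z3 ->
  chord_rel (p0 a b) ((p0 a b ^ 2 - 1) / 2) z1 z2 = 0.
Proof.
  intros (h1 & h2 & _ & _ & _ & _ & S1 & S2).
  apply sym_biquad_eq0_iff; auto.
  apply (sym_biquad_of_vieta _ _ _ _ z3); auto. field.
Qed.

Lemma billiard_sides (z1 z2 z3 : C) : billiard_roots a b z1 z2 z3 ->
  exists K, 0 < K /\
    dist (stretch a b z1) (stretch a b z2) = vers z1 z2 / K /\
    dist (stretch a b z1) (stretch a b z3) = vers z1 z3 / K /\
    dist (stretch a b z2) (stretch a b z3) = vers z2 z3 / K.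
Proof.
  intros H. pose proof H as (h1 & h2 & h3 & d12 & d13 & d23 & _).
  generalize (billiard_chord _ _ _ H) (billiard_chord _ _ _ (billiard_roots_rot _ _ _ _ _ H))
    (billiard_chord _ _ _ (billiard_roots_rot _ _ _ _ _ (billiard_roots_rot _ _ _ _ _ H))).
  generalize (p0_bounds a b hb hab) (p0_quad a b hb hab) (csq_pos a b hb hab).
  intros hp hq hc C12 C23 C31.
  set (K := sqrt (p0 a b / (a^2 - b^2))).
  assert (hK2 : K^2 = p0 a b / (a^2 - b^2)).
  { apply pow2_sqrt. apply Rlt_le, Rdiv_lt_0_compat; lra. }
  assert (Hpq : forall u v, chord_rel (p0 a b) ((p0 a b ^ 2 - 1) / 2) u v = 0 ->
                            chord_rel (K^2 * (a^2 - b^2)) (1 - K^2 * (a^2 + b^2)) u v = 0).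
  { assert (Eq : 1 - p0 a b / (a^2 - b^2) * (a^2 + b^2) = (p0 a b ^ 2 - 1) / 2).
    { apply Rmult_eq_reg_l with (2 * (a^2 - b^2)); [|lra].
      transitivity (2 * (a^2 - b^2) - 2 * p0 a b * (a^2 + b^2)); [field; lra|].
      transitivity ((a^2 - b^2) * (p0 a b ^ 2 - 1)); [lra|field]. }
    intros u v. rewrite hK2, Eq. unfold chord_rel.
    replace (p0 a b / (a^2 - b^2) * (a^2 - b^2)) with (p0 a b) by (field; lra). auto. }
  assert (hK : 0 < K) by (apply sqrt_lt_R0, Rdiv_lt_0_compat; lra).
  exists K. repeat split; auto.
  - apply (dist_stretch_iff a b K z1 z2); auto.
  - apply (dist_stretch_iff a b K z1 z3); auto.
    apply Hpq. unfold chord_rel in *. lra.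
  - apply (dist_stretch_iff a b K z2 z3); auto.
Qed.

Lemma periodic_of_billiard_roots (z1 z2 z3 : C) : billiard_roots a b z1 z2 z3 ->
  three_periodic a b (stretch a b z1) (stretch a b z2) (stretch a b z3).
Proof.
  intros H. pose proof H as (h1 & h2 & h3 & d12 & d13 & d23 & _).
  destruct (billiard_sides _ _ _ H) as (K & hK & D12 & D13 & D23).
  assert (hnd : nondegenerate (stretch a b z1) (stretch a b z2) (stretch a b z3))
    by (apply nondegenerate_stretch; auto; lra).
  assert (hnd2 := nondegenerate_rot _ _ _ hnd). assert (hnd3 := nondegenerate_rot _ _ _ hnd2).
  repeat split; try (apply on_ellipse_stretch; auto); auto.
  - apply normal_bisects_stretch; auto.
    rewrite (dist_sym (stretch a b z3)), (dist_sym (stretch a b z2)), D12, D13. field. lra.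
  - apply normal_bisects_stretch; auto.
    rewrite (dist_sym (stretch a b z3)), D12, D23, (vers_comm z2 z1). field. lra.
  - apply normal_bisects_stretch; auto.
    rewrite D13, D23, (vers_comm z3 z1), (vers_comm z3 z2). field. lra.
Qed.

End Periodics.

Lemma on_circle_angle (t : R) : on_circle (cos t, sin t).
Proof. unfold on_circle, dot; simpl. generalize (sin2_cos2 t). unfold Rsqr. lra. Qed.

Lemma on_circle_mult (z w : C) : on_circle z -> on_circle w -> on_circle (z * w)%C.
Proof.
  destruct z as [x1 y1], w as [x2 y2]. unfold on_circle, dot; simpl. intros. nsatz.
Qed.

Lemma on_circle_exists_angle (s : pt) : on_circle s -> exists t, s = (cos t, sin t).
Proof.
  destruct s as [x y]. unfold on_circle, dot; simpl. intros H.
  assert (hx : -1 <= x <= 1) by nra.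
  assert (E : sqrt (1 - x²) = Rabs y) by (rewrite <- sqrt_Rsqr_abs; f_equal; unfold Rsqr; lra).
  destruct (Rle_lt_dec 0 y) as [hy|hy].
  - exists (acos x). rewrite cos_acos, sin_acos, E, Rabs_right; auto. lra.
  - exists (- acos x). rewrite cos_neg, sin_neg, cos_acos, sin_acos, E, Rabs_left; auto.
    f_equal. ring.
Qed.

Lemma on_ellipse_angle_iff (A B : R) (X : pt) : A <> 0 -> B <> 0 ->
  on_ellipse A B X <-> exists t, X = (- A * cos t, - B * sin t).
Proof.
  intros hA hB. unfold on_ellipse. split.
  - intros H. destruct (on_circle_exists_angle (- fst X / A, - snd X / B)) as [t Ht].
    + unfold on_circle, dot; simpl. rewrite <- H. field. auto.
    + exists t. injection Ht as Hc Hs. rewrite <- Hc, <- Hs.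
      destruct X as [x y]; simpl. f_equal; field; auto.
  - intros [t ->]; simpl. generalize (sin2_cos2 t). unfold Rsqr. intro.
    transitivity (sin t * sin t + cos t * cos t); [field; auto|lra].
Qed.

Definition cubic_phase (p t r : R) : R := sin (3*r - t/2) + p * sin (r + t/2).

(* [z^3 + p s z^2 - p z - s = 2i e^(i(3r+t/2)) cubic_phase p t r] for [z = e^(2ir)], [s = e^(it)]. *)
Lemma cubic_phase_root (p t r : R) : cubic_phase p t r = 0 ->
  let z := ((cos (2*r), sin (2*r)) : C) in let s := ((cos t, sin t) : C) in
  (z*z*z + (p*s)*(z*z) + (-p)*z + (-s) = 0)%C.
Proof.
  intros g z s. unfold cubic_phase in g.
  rewrite sin_minus in g. replace (3*r) with (2*r + r) in g by ring.
  rewrite sin_plus, cos_plus, sin_plus in g. rewrite sin_2a, cos_2a in g.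
  unfold z, s. rewrite sin_2a, cos_2a. replace t with (2*(t/2)) by field. rewrite sin_2a, cos_2a.
  assert (h1 : cos r * cos r + sin r * sin r = 1) by (generalize (sin2_cos2 r); unfold Rsqr; lra).
  assert (h2 : cos (t/2) * cos (t/2) + sin (t/2) * sin (t/2) = 1)
    by (generalize (sin2_cos2 (t/2)); unfold Rsqr; lra).
  set (c := cos r) in *. set (sn := sin r) in *.
  set (ch := cos (t/2)) in *. set (sh := sin (t/2)) in *. clearbody c sn ch sh.
  apply injective_projections; simpl; nsatz.
Qed.

Lemma IVT_strict (f : R -> R) (x y : R) : continuity f -> x < y -> f x * f y < 0 ->
  exists z, x < z < y /\ f z = 0.
Proof.
  intros hc hxy hs.
  assert (hstrict : forall z, x <= z <= y -> f z = 0 -> x < z < y).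
  { intros z hz e.
    destruct (Req_dec z x) as [->|nx]; [rewrite e in hs; lra|].
    destruct (Req_dec z y) as [->|ny]; [rewrite e in hs; lra|]. lra. }
  destruct (Rtotal_order (f x) 0) as [hx|[hx|hx]]; [| rewrite hx in hs; lra |].
  - destruct (IVT f x y hc hxy hx) as [z [hz e]]; [nra|]. exists z. auto.
  - destruct (IVT (fun r => - f r) x y (continuity_opp _ hc) hxy) as [z [hz e]];
      cbv beta in *; [lra|nra|].
    exists z. split; [apply hstrict|]; lra.
Qed.

Lemma cubic_phase_three_zeros (p t : R) : 0 < p < 1 ->
  exists r0 r1 r2, cubic_phase p t r0 = 0 /\ cubic_phase p t r1 = 0 /\ cubic_phase p t r2 = 0 /\
    r0 < r1 < r2 /\ r2 - r0 < PI.
Proof.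
  intros hp.
  (* at [r_k = (t/2 + PI/2 + k PI)/3] the first term is [(-1)^k] and dominates the second *)
  set (r k := (t/2 + PI/2 + INR k * PI) / 3).
  assert (E : forall k, cubic_phase p t (r k) = sin (PI/2 + INR k * PI) + p * sin (r k + t/2)).
  { intros k. unfold cubic_phase. f_equal. f_equal. unfold r. field. }
  assert (B := fun k => SIN_bound (r k + t/2)).
  assert (g0 : 0 < cubic_phase p t (r 0%nat)).
  { rewrite E. simpl. rewrite Rmult_0_l, Rplus_0_r, sin_PI2. generalize (B 0%nat); nra. }
  assert (g1 : cubic_phase p t (r 1%nat) < 0).
  { rewrite E. simpl. rewrite Rmult_1_l, neg_sin, sin_PI2. generalize (B 1%nat); nra. }
  assert (g2 : 0 < cubic_phase p t (r 2%nat)).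
  { rewrite E. simpl. replace (PI/2 + (1+1)*PI) with (PI/2 + PI + PI) by ring.
    rewrite !neg_sin, sin_PI2. generalize (B 2%nat); nra. }
  assert (g3 : cubic_phase p t (r 3%nat) < 0).
  { rewrite E. simpl. replace (PI/2 + (1+1+1)*PI) with (PI/2 + PI + PI + PI) by ring.
    rewrite !neg_sin, sin_PI2. generalize (B 3%nat); nra. }
  assert (hc : continuity (cubic_phase p t)) by (unfold cubic_phase; reg).
  assert (hPI := PI_RGT_0).
  destruct (IVT_strict _ (r 0%nat) (r 1%nat) hc) as [r0 [h0 e0]]; [unfold r; simpl; lra|nra|].
  destruct (IVT_strict _ (r 1%nat) (r 2%nat) hc) as [r1 [h1 e1]]; [unfold r; simpl; lra|nra|].
  destruct (IVT_strict _ (r 2%nat) (r 3%nat) hc) as [r2 [h2 e2]]; [unfold r; simpl; lra|nra|].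
  exists r0, r1, r2. repeat split; auto; try lra.
  assert (r 3%nat - r 0%nat = PI) by (unfold r; simpl; field). lra.
Qed.

Lemma angle_double_inj (r r' : R) : 0 < r' - r < PI ->
  ((cos (2*r), sin (2*r)) : C) <> (cos (2*r'), sin (2*r')).
Proof.
  intros hr E. injection E as Ec Es.
  assert (hs : 0 < sin (r' - r)) by (apply sin_gt_0; lra).
  generalize (cos_minus (2*r') (2*r)) (cos_2a_sin (r' - r)) (on_circle_angle (2*r)).
  unfold on_circle, dot; simpl.
  replace (2*r' - 2*r) with (2*(r' - r)) by ring. rewrite <- Ec, <- Es. nra.
Qed.

Lemma billiard_roots_exist (a b t : R) : 0 < b -> b < a ->
  exists z1 z2 z3, billiard_roots a b z1 z2 z3 /\ (z1 * z2 * z3)%C = (cos t, sin t).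
Proof.
  intros hb hab.
  destruct (cubic_phase_three_zeros (p0 a b) t (p0_bounds a b hb hab))
    as (r0 & r1 & r2 & g0 & g1 & g2 & l01 & l02).
  assert (d12 := angle_double_inj r0 r1 ltac:(lra)).
  assert (d13 := angle_double_inj r0 r2 ltac:(lra)).
  assert (d23 := angle_double_inj r1 r2 ltac:(lra)).
  destruct (vieta_cubic _ _ _ _ _ _ d12 d13 d23
              (cubic_phase_root _ _ _ g0) (cubic_phase_root _ _ _ g1) (cubic_phase_root _ _ _ g2))
    as (S1 & S2 & S3).
  exists (cos (2*r0), sin (2*r0)), (cos (2*r1), sin (2*r1)), (cos (2*r2), sin (2*r2)).
  split; [|rewrite S3; ring].
  repeat split; try apply on_circle_angle; auto.
  rewrite S1, S3. ring.
Qed.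

Section SymmetricFunctions.
Variables (p : R) (z1 z2 z3 : C).
Hypotheses (h1 : on_circle z1) (h2 : on_circle z2) (h3 : on_circle z3)
  (S1 : (z1 + z2 + z3 = - p * (z1 * z2 * z3))%C) (S2 : (z1 * z2 + z2 * z3 + z3 * z1 = - p)%C).

Lemma spieker_sums :
  2 * ((vers z1 z2 + vers z1 z3) * fst z1 + (vers z1 z2 + vers z2 z3) * fst z2
       + (vers z1 z3 + vers z2 z3) * fst z3) = (p^3 - 3*p + 2*p^2) * fst (z1 * z2 * z3)%C /\
  2 * ((vers z1 z2 + vers z1 z3) * snd z1 + (vers z1 z2 + vers z2 z3) * snd z2
       + (vers z1 z3 + vers z2 z3) * snd z3) = (p^3 - 3*p - 2*p^2) * snd (z1 * z2 * z3)%C /\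
  2 * (vers z1 z2 + vers z1 z3 + vers z2 z3) = 9 - p^2.
Proof.
  generalize (f_equal fst S1) (f_equal snd S1) (f_equal fst S2) (f_equal snd S2).
  revert h1 h2 h3. destruct z1 as [x1 y1], z2 as [x2 y2], z3 as [x3 y3].
  unfold on_circle, vers, dot; simpl. intros.
  cbv beta iota delta [pow] in *. repeat split; nsatz.
Qed.

Lemma orthocenter_sums :
  ((p^2 - 5) * p * fst (z1 * z2 * z3)%C - (3 - p) * (1 + p) * fst z1) * (fst z2 - fst z3)
  + ((p^2 - 5) * p * snd (z1 * z2 * z3)%C - (3 + p) * (1 - p) * snd z1) * (snd z2 - snd z3) = 0.
Proof.
  generalize (f_equal fst S1) (f_equal snd S1) (f_equal fst S2) (f_equal snd S2).
  revert h1 h2 h3. destruct z1 as [x1 y1], z2 as [x2 y2], z3 as [x3 y3].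
  unfold on_circle, dot; simpl. intros.
  cbv beta iota delta [pow] in *. nsatz.
Qed.

End SymmetricFunctions.

Definition on_altitudes (P1 P2 P3 Y : pt) : Prop :=
  dot (vsub Y P1) (vsub P2 P3) = 0 /\ dot (vsub Y P2) (vsub P3 P1) = 0.

Lemma dot_eq0_basis (w d e : pt) : cross d e <> 0 -> dot w d = 0 -> dot w e = 0 -> w = (0, 0).
Proof.
  destruct w as [w1 w2], d as [d1 d2], e as [e1 e2]. unfold cross, dot; simpl. intros hc h1 h2.
  assert (E1 : w1 * (d1*e2 - d2*e1) = 0).
  { transitivity (e2 * (w1*d1 + w2*d2) - d2 * (w1*e1 + w2*e2)); [ring|rewrite h1, h2; ring]. }
  assert (E2 : w2 * (d1*e2 - d2*e1) = 0).
  { transitivity (d1 * (w1*e1 + w2*e2) - e1 * (w1*d1 + w2*d2)); [ring|rewrite h1, h2; ring]. }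
  apply Rmult_integral in E1 as [E1|E1]; [|contradiction].
  apply Rmult_integral in E2 as [E2|E2]; [|contradiction].
  rewrite E1, E2. reflexivity.
Qed.

Lemma on_altitudes_unique (P1 P2 P3 Y Y' : pt) : nondegenerate P1 P2 P3 ->
  on_altitudes P1 P2 P3 Y -> on_altitudes P1 P2 P3 Y' -> Y = Y'.
Proof.
  intros hnd [h1 h2] [h3 h4].
  assert (W : vsub Y Y' = (0, 0)).
  { apply (dot_eq0_basis _ (vsub P2 P3) (vsub P3 P1)).
    - intro E. apply hnd. rewrite <- E. unfold cross, vsub; simpl; ring.
    - revert h1 h3. unfold dot, vsub; simpl. lra.
    - revert h2 h4. unfold dot, vsub; simpl. lra. }
  destruct Y as [u1 u2], Y' as [v1 v2]. unfold vsub in W; simpl in W.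
  injection W as W1 W2. f_equal; lra.
Qed.

Lemma center4_on_altitudes (P1 P2 P3 : pt) : center_defined h4 h4_dom P1 P2 P3 ->
  on_altitudes P1 P2 P3 (center h4 P1 P2 P3).
Proof.
  unfold center_defined, center, on_altitudes, h4, h4_dom. cbv zeta.
  rewrite (dist_sq P2 P3), (dist_sq P3 P1), (dist_sq P1 P2).
  set (s1 := dist P2 P3). set (s2 := dist P3 P1). set (s3 := dist P1 P2). clearbody s1 s2 s3.
  set (D1 := dot (vsub P3 P1) (vsub P3 P1) + dot (vsub P1 P2) (vsub P1 P2)
             - dot (vsub P2 P3) (vsub P2 P3)).
  set (D2 := dot (vsub P1 P2) (vsub P1 P2) + dot (vsub P2 P3) (vsub P2 P3)
             - dot (vsub P3 P1) (vsub P3 P1)).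
  set (D3 := dot (vsub P2 P3) (vsub P2 P3) + dot (vsub P3 P1) (vsub P3 P1)
             - dot (vsub P1 P2) (vsub P1 P2)).
  intros (d1 & d2 & d3 & w).
  apply Rmult_neq_0_reg in d1 as [n1 N1].
  apply Rmult_neq_0_reg in d2 as [n2 N2].
  apply Rmult_neq_0_reg in d3 as [n3 N3].
  assert (W : D2 * D3 + D1 * D3 + D1 * D2 <> 0).
  { intro E. apply w.
    transitivity ((D2 * D3 + D1 * D3 + D1 * D2) / (D1 * D2 * D3)); [field; repeat split; auto|].
    rewrite E. unfold Rdiv. ring. }
  subst D1 D2 D3. revert N1 N2 N3 W.
  destruct P1 as [x1 y1], P2 as [x2 y2], P3 as [x3 y3]. unfold dot, vsub; simpl. intros.
  split; field; repeat split; auto; intro E; apply W; rewrite <- E; ring.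
Qed.

Lemma center4_defined_or_right (P1 P2 P3 : pt) : nondegenerate P1 P2 P3 ->
  center_defined h4 h4_dom P1 P2 P3 \/
  on_altitudes P1 P2 P3 P1 \/ on_altitudes P1 P2 P3 P2 \/ on_altitudes P1 P2 P3 P3.
Proof.
  intros hnd. destruct (nondegenerate_distinct _ _ _ hnd) as (n12 & n13 & n23).
  assert (n1 : dist P2 P3 <> 0) by (apply Rgt_not_eq, dist_pos; auto).
  assert (n2 : dist P3 P1 <> 0) by (apply Rgt_not_eq, dist_pos; auto).
  assert (n3 : dist P1 P2 <> 0) by (apply Rgt_not_eq, dist_pos; auto).
  unfold center_defined, h4, h4_dom, on_altitudes. cbv zeta.
  revert n1 n2 n3. rewrite (dist_sq P2 P3), (dist_sq P3 P1), (dist_sq P1 P2).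
  set (s1 := dist P2 P3). set (s2 := dist P3 P1). set (s3 := dist P1 P2). clearbody s1 s2 s3.
  revert hnd. unfold nondegenerate, cross.
  destruct P1 as [x1 y1], P2 as [x2 y2], P3 as [x3 y3]. unfold dot, vsub; simpl. intros hnd n1 n2 n3.
  set (D1 := (x3 - x1) * (x3 - x1) + (y3 - y1) * (y3 - y1)
             + ((x1 - x2) * (x1 - x2) + (y1 - y2) * (y1 - y2))
             - ((x2 - x3) * (x2 - x3) + (y2 - y3) * (y2 - y3))).
  set (D2 := (x1 - x2) * (x1 - x2) + (y1 - y2) * (y1 - y2)
             + ((x2 - x3) * (x2 - x3) + (y2 - y3) * (y2 - y3))
             - ((x3 - x1) * (x3 - x1) + (y3 - y1) * (y3 - y1))).
  set (D3 := (x2 - x3) * (x2 - x3) + (y2 - y3) * (y2 - y3)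
             + ((x3 - x1) * (x3 - x1) + (y3 - y1) * (y3 - y1))
             - ((x1 - x2) * (x1 - x2) + (y1 - y2) * (y1 - y2))).
  destruct (Req_dec D1 0) as [R1|R1]; [right; left; unfold D1 in R1; split; nra|].
  destruct (Req_dec D2 0) as [R2|R2]; [right; right; left; unfold D2 in R2; split; nra|].
  destruct (Req_dec D3 0) as [R3|R3]; [right; right; right; unfold D3 in R3; split; nra|].
  left. repeat split; try (apply Rmult_integral_contrapositive; split; auto).
  replace (1 / (s1 * D1) * s1 + 1 / (s2 * D2) * s2 + 1 / (s3 * D3) * s3)
    with ((D2 * D3 + D1 * D3 + D1 * D2) / (D1 * D2 * D3)) by (field; repeat split; auto).
  (* the numerator is sixteen times the squared area *)
  replace (D2 * D3 + D1 * D3 + D1 * D2)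
    with (4 * ((x2 - x1) * (y3 - y1) - (y2 - y1) * (x3 - x1))^2) by (unfold D1, D2, D3; ring).
  apply Rmult_integral_contrapositive. split.
  - apply Rmult_integral_contrapositive. split; [lra|apply pow_nonzero; auto].
  - apply Rinv_neq_0_compat. repeat apply Rmult_integral_contrapositive; auto.
Qed.

Section Centers.
Variables (a b : R) (z1 z2 z3 : C).
Hypotheses (hb : 0 < b) (hab : b < a) (H : billiard_roots a b z1 z2 z3).

Let ha : 0 < a.
Proof. lra. Qed.

Lemma center10_billiard :
  center_defined h10 h10_dom (stretch a b z1) (stretch a b z2) (stretch a b z3) /\
  center h10 (stretch a b z1) (stretch a b z2) (stretch a b z3)
  = (- (k10 a b / a) * fst (z1 * z2 * z3)%C, - (k10 a b / b) * snd (z1 * z2 * z3)%C).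
Proof.
  pose proof H as (h1 & h2 & h3 & d12 & d13 & d23 & S1 & S2).
  destruct (billiard_sides a b hb hab _ _ _ H) as (K & hK & D12 & D13 & D23).
  destruct (spieker_sums _ _ _ _ h1 h2 h3 S1 S2) as (X & Y & W).
  generalize (vers_pos _ _ h1 h2 d12) (vers_pos _ _ h1 h3 d13) (vers_pos _ _ h2 h3 d23).
  intros v12 v13 v23.
  unfold center_defined, center, h10, h10_dom. cbv zeta.
  rewrite (dist_sym (stretch a b z3) (stretch a b z1)), D12, D13, D23.
  unfold stretch; cbn [fst snd].
  set (w := vers z1 z2 + vers z1 z3 + vers z2 z3) in W.
  assert (hw : (vers z1 z3 / K + vers z1 z2 / K) / (vers z2 z3 / K) * (vers z2 z3 / K)
               + (vers z1 z2 / K + vers z2 z3 / K) / (vers z1 z3 / K) * (vers z1 z3 / K)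
               + (vers z2 z3 / K + vers z1 z3 / K) / (vers z1 z2 / K) * (vers z1 z2 / K)
               = 2 * w / K) by (unfold w; field; lra).
  split.
  - repeat split; try (apply Rgt_not_eq, Rdiv_lt_0_compat; assumption).
    rewrite hw. apply Rgt_not_eq, Rdiv_lt_0_compat; unfold w; lra.
  - rewrite hw. f_equal.
    + transitivity (a * (2 * ((vers z1 z2 + vers z1 z3) * fst z1 + (vers z1 z2 + vers z2 z3) * fst z2
                                + (vers z1 z3 + vers z2 z3) * fst z3)) / (2 * (2 * w)));
        [unfold w in *; field; lra|].
      rewrite X, W. replace (- (k10 a b / a)) with (- k10 a b / a) by (field; lra).
      rewrite <- (spieker_coef_a a b hb hab). generalize (p0_bounds a b hb hab). intro. field. nra.
    + transitivity (b * (2 * ((vers z1 z2 + vers z1 z3) * snd z1 + (vers z1 z2 + vers z2 z3) * snd z2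
                                + (vers z1 z3 + vers z2 z3) * snd z3)) / (2 * (2 * w)));
        [unfold w in *; field; lra|].
      rewrite Y, W. replace (- (k10 a b / b)) with (- k10 a b / b) by (field; lra).
      rewrite <- (spieker_coef_b a b hb hab). generalize (p0_bounds a b hb hab). intro. field. nra.
Qed.

Lemma billiard_on_altitudes :
  on_altitudes (stretch a b z1) (stretch a b z2) (stretch a b z3)
    (- (k4 a b / a) * fst (z1 * z2 * z3)%C, - (k4 a b / b) * snd (z1 * z2 * z3)%C).
Proof.
  assert (Alt : forall u1 u2 u3, billiard_roots a b u1 u2 u3 ->
    dot (vsub (- (k4 a b / a) * fst (u1 * u2 * u3)%C, - (k4 a b / b) * snd (u1 * u2 * u3)%C)
              (stretch a b u1)) (vsub (stretch a b u2) (stretch a b u3)) = 0).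
  { intros u1 u2 u3 (h1 & h2 & h3 & _ & _ & _ & S1 & S2).
    generalize (orthocenter_sums _ _ _ _ h1 h2 h3 S1 S2).
    generalize (p0_sq_a a b hb hab) (p0_sq_b a b hb hab) (k4_p0 a b hb hab) (p0_bounds a b hb hab)
      (csq_pos a b hb hab).
    set (p := p0 a b). intros Ha Hb Hk Hp Hc E.
    unfold dot, vsub, stretch; cbn [fst snd].
    (* multiplied by [4 p], the altitude condition becomes [a^2 - b^2] times [orthocenter_sums] *)
    apply Rmult_eq_reg_l with (4 * p); [rewrite Rmult_0_r|lra].
    transitivity
      ((- 4 * p * k4 a b * fst (u1 * u2 * u3)%C - 4 * p * a^2 * fst u1) * (fst u2 - fst u3)
       + (- 4 * p * k4 a b * snd (u1 * u2 * u3)%C - 4 * p * b^2 * snd u1) * (snd u2 - snd u3));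
      [field; lra|].
    rewrite Ha, Hb, Hk.
    match type of E with ?e = 0 => transitivity ((a^2 - b^2) * e); [field|rewrite E; ring] end. }
  split.
  - apply Alt, H.
  - assert (H' := billiard_roots_rot _ _ _ _ _ H).
    replace (z1 * z2 * z3)%C with (z2 * z3 * z1)%C by ring. apply Alt, H'.
Qed.

Lemma center4_billiard :
  center_defined h4 h4_dom (stretch a b z1) (stretch a b z2) (stretch a b z3) ->
  center h4 (stretch a b z1) (stretch a b z2) (stretch a b z3)
  = (- (k4 a b / a) * fst (z1 * z2 * z3)%C, - (k4 a b / b) * snd (z1 * z2 * z3)%C).
Proof.
  intros hd. pose proof H as (h1 & h2 & h3 & d12 & d13 & d23 & _).
  apply (on_altitudes_unique (stretch a b z1) (stretch a b z2) (stretch a b z3)).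
  - apply nondegenerate_stretch; auto; lra.
  - apply center4_on_altitudes, hd.
  - apply billiard_on_altitudes.
Qed.

(* A right-angled 3-periodic has its orthocenter at a vertex, on the billiard ellipse itself. *)
Lemma center4_billiard_undefined :
  ~ center_defined h4 h4_dom (stretch a b z1) (stretch a b z2) (stretch a b z3) ->
  on_ellipse a b (- (k4 a b / a) * fst (z1 * z2 * z3)%C, - (k4 a b / b) * snd (z1 * z2 * z3)%C).
Proof.
  intros hd. pose proof H as (h1 & h2 & h3 & d12 & d13 & d23 & _).
  assert (hnd : nondegenerate (stretch a b z1) (stretch a b z2) (stretch a b z3))
    by (apply nondegenerate_stretch; auto; lra).
  assert (Y := billiard_on_altitudes).
  destruct (center4_defined_or_right _ _ _ hnd) as [D|[R|[R|R]]]; [contradiction| | |];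
    rewrite (on_altitudes_unique _ _ _ _ _ hnd Y R); apply on_ellipse_stretch; auto.
Qed.

End Centers.

Lemma abs_coord_le_dist (P Q : pt) :
  Rabs (fst P - fst Q) <= dist P Q /\ Rabs (snd P - snd Q) <= dist P Q.
Proof.
  unfold dist. split; rewrite <- sqrt_Rsqr_abs; apply sqrt_le_1_alt; unfold Rsqr;
    generalize (pow2_ge_0 (fst P - fst Q)) (pow2_ge_0 (snd P - snd Q)); simpl; lra.
Qed.

Lemma dist_le_abs_coord (P Q : pt) : dist P Q <= Rabs (fst P - fst Q) + Rabs (snd P - snd Q).
Proof.
  generalize (Rabs_pos (fst P - fst Q)) (Rabs_pos (snd P - snd Q))
    (Rsqr_abs (fst P - fst Q)) (Rsqr_abs (snd P - snd Q)) (dist_sq P Q).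
  unfold dot, vsub, Rsqr; simpl. intros.
  apply Rsqr_incr_0_var; [unfold Rsqr; nra|lra].
Qed.

Lemma continuity_eps (f : R -> R) (x0 eps : R) : continuity f -> 0 < eps ->
  exists d, 0 < d /\ forall x, Rabs (x - x0) < d -> Rabs (f x - f x0) < eps.
Proof.
  intros hc he. destruct (hc x0 eps he) as [d [hd H]]. exists d. split; auto. intros x hx.
  destruct (Req_dec x x0) as [->|ne].
  - rewrite Rminus_diag_eq, Rabs_R0; auto.
  - apply (H x). repeat split; auto.
Qed.

Lemma ellipse_param_continuous (A B t0 eps : R) : 0 < eps ->
  exists d, 0 < d /\ forall t, Rabs (t - t0) < d ->
    dist (- A * cos t0, - B * sin t0) (- A * cos t, - B * sin t) < eps.
Proof.
  intros he. set (L := Rabs A + Rabs B + 1).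
  assert (hL : 0 < L) by (unfold L; generalize (Rabs_pos A) (Rabs_pos B); lra).
  assert (heta : 0 < eps / L) by (apply Rdiv_lt_0_compat; auto).
  destruct (continuity_eps cos t0 _ continuity_cos heta) as [d1 [hd1 D1]].
  destruct (continuity_eps sin t0 _ continuity_sin heta) as [d2 [hd2 D2]].
  exists (Rmin d1 d2). split; [apply Rmin_glb_lt; auto|]. intros t ht.
  eapply Rle_lt_trans; [apply dist_le_abs_coord|]; simpl.
  replace (- A * cos t0 - - A * cos t) with (A * (cos t - cos t0)) by ring.
  replace (- B * sin t0 - - B * sin t) with (B * (sin t - sin t0)) by ring.
  rewrite !Rabs_mult.
  assert (c := D1 t (Rlt_le_trans _ _ _ ht (Rmin_l _ _))).
  assert (s := D2 t (Rlt_le_trans _ _ _ ht (Rmin_r _ _))).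
  assert (eps = L * (eps / L)) by (field; lra).
  generalize (Rabs_pos A) (Rabs_pos B) (Rabs_pos (cos t - cos t0)) (Rabs_pos (sin t - sin t0)).
  unfold L in *. nra.
Qed.

Lemma sq_diff_bound (x u r : R) : Rabs (x - u) <= r -> r <= 1 ->
  Rabs (x^2 - u^2) <= r * (2 * Rabs x + 1).
Proof.
  intros h1 h2. replace (x^2 - u^2) with ((x - u) * (2 * x - (x - u))) by ring.
  rewrite Rabs_mult. apply Rmult_le_compat; try apply Rabs_pos; auto.
  eapply Rle_trans; [apply Rabs_triang|]. rewrite Rabs_Ropp, Rabs_mult, (Rabs_right 2); lra.
Qed.

Lemma closure_ellipse (A B : R) (S : pt -> Prop) (X : pt) : A <> 0 -> B <> 0 ->
  (forall Y, S Y -> on_ellipse A B Y) -> closure S X -> on_ellipse A B X.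
Proof.
  intros hA hB HS HX. unfold on_ellipse in *.
  destruct (Req_dec (fst X ^ 2 / A^2 + snd X ^ 2 / B^2) 1) as [E|E]; auto. exfalso.
  set (e := Rabs (fst X ^ 2 / A^2 + snd X ^ 2 / B^2 - 1)).
  assert (he : 0 < e) by (apply Rabs_pos_lt; lra).
  assert (hA2 : 0 < A^2) by (apply pow2_gt_0; auto).
  assert (hB2 : 0 < B^2) by (apply pow2_gt_0; auto).
  set (M := (2 * Rabs (fst X) + 1) / A^2 + (2 * Rabs (snd X) + 1) / B^2).
  assert (hM : 0 < M).
  { unfold M. generalize (Rabs_pos (fst X)) (Rabs_pos (snd X)). intros.
    apply Rplus_lt_0_compat; apply Rdiv_lt_0_compat; lra. }
  destruct (HX (Rmin 1 (e / M))) as [Y [SY dY]].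
  { apply Rmin_glb_lt; [lra|apply Rdiv_lt_0_compat; auto]. }
  assert (d1 := Rmin_l 1 (e / M)). assert (d2 := Rmin_r 1 (e / M)).
  destruct (abs_coord_le_dist X Y) as [bx by'].
  assert (gY := HS Y SY).
  assert (Bx := sq_diff_bound (fst X) (fst Y) (dist X Y) bx ltac:(lra)).
  assert (By := sq_diff_bound (snd X) (snd Y) (dist X Y) by' ltac:(lra)).
  assert (Hle : e <= dist X Y * M).
  { unfold e. rewrite <- gY.
    replace (fst X ^ 2 / A ^ 2 + snd X ^ 2 / B ^ 2 - (fst Y ^ 2 / A ^ 2 + snd Y ^ 2 / B ^ 2))
      with ((fst X ^ 2 - fst Y ^ 2) / A^2 + (snd X ^ 2 - snd Y ^ 2) / B^2) by (field; auto).
    eapply Rle_trans; [apply Rabs_triang|]. unfold Rdiv. rewrite !Rabs_mult.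
    rewrite !Rabs_inv, !(Rabs_right (_ ^ 2)) by lra. unfold M, Rdiv.
    generalize (Rinv_0_lt_compat _ hA2) (Rinv_0_lt_compat _ hB2). intros. nra. }
  assert (dist X Y * M < e / M * M) by (apply Rmult_lt_compat_r; lra).
  replace (e / M * M) with e in H by (field; lra). lra.
Qed.

Lemma cos_sq_eq_sin (t v : R) : 0 < v < PI -> cos t ^ 2 = cos (t + v) ^ 2 -> sin (2*t + v) = 0.
Proof.
  intros hv E.
  assert (hs : 0 < sin v) by (apply sin_gt_0; lra).
  assert (Hc : cos (2*t) - cos (2*(t + v)) = 0) by (rewrite !cos_2a_cos; simpl in E; lra).
  rewrite form2 in Hc.
  replace ((2*t - 2*(t + v)) / 2) with (- v) in Hc by field.
  replace ((2*t + 2*(t + v)) / 2) with (2*t + v) in Hc by field.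
  rewrite sin_neg in Hc. nra.
Qed.

Lemma cos_sq_not_thrice (t u : R) : 0 < u < 1 ->
  cos t ^ 2 = cos (t + u) ^ 2 -> cos t ^ 2 = cos (t + 2*u) ^ 2 -> False.
Proof.
  intros hu h1 h2. assert (hPI := PI2_1).
  apply cos_sq_eq_sin in h1; [|lra]. apply cos_sq_eq_sin in h2; [|lra].
  assert (hs : 0 < sin u) by (apply sin_gt_0; lra).
  replace u with ((2*t + 2*u) - (2*t + u)) in hs by ring.
  rewrite sin_minus, h1, h2 in hs. lra.
Qed.


Section Loci.
Variables (a b : R).
Hypotheses (hb : 0 < b) (hab : b < a).

Lemma billiard_product_angle (z1 z2 z3 : C) : billiard_roots a b z1 z2 z3 ->
  exists t, (z1 * z2 * z3)%C = (cos t, sin t).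
Proof.
  intros (h1 & h2 & h3 & _). apply on_circle_exists_angle.
  repeat apply on_circle_mult; auto.
Qed.

Lemma locus10_iff (X : pt) : locus h10 h10_dom a b X <-> on_ellipse (k10 a b / a) (k10 a b / b) X.
Proof.
  assert (hk := k10_pos a b hb hab).
  rewrite on_ellipse_angle_iff by (apply Rgt_not_eq, Rdiv_lt_0_compat; lra).
  split.
  - intros (P1 & P2 & P3 & T & _ & ->).
    destruct (billiard_roots_of_periodic a b hb hab _ _ _ T) as (z1 & z2 & z3 & H & -> & -> & ->).
    destruct (billiard_product_angle _ _ _ H) as [t Ht].
    exists t. rewrite (proj2 (center10_billiard a b z1 z2 z3 hb hab H)), Ht. reflexivity.
  - intros [t ->].
    destruct (billiard_roots_exist a b t hb hab) as (z1 & z2 & z3 & H & Ht).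
    destruct (center10_billiard a b z1 z2 z3 hb hab H) as [hd hc].
    exists (stretch a b z1), (stretch a b z2), (stretch a b z3).
    split; [apply periodic_of_billiard_roots; auto|]. split; auto. rewrite hc, Ht. reflexivity.
Qed.

Lemma locus4_on_ellipse (X : pt) : locus h4 h4_dom a b X -> on_ellipse (k4 a b / a) (k4 a b / b) X.
Proof.
  assert (hk := k4_pos a b hb hab).
  rewrite on_ellipse_angle_iff by (apply Rgt_not_eq, Rdiv_lt_0_compat; lra).
  intros (P1 & P2 & P3 & T & hd & ->).
  destruct (billiard_roots_of_periodic a b hb hab _ _ _ T) as (z1 & z2 & z3 & H & -> & -> & ->).
  destruct (billiard_product_angle _ _ _ H) as [t Ht].
  exists t. rewrite (center4_billiard a b z1 z2 z3 hb hab H hd), Ht. reflexivity.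
Qed.

Lemma locus4_or_ellipse (t : R) :
  locus h4 h4_dom a b (- (k4 a b / a) * cos t, - (k4 a b / b) * sin t) \/
  on_ellipse a b (- (k4 a b / a) * cos t, - (k4 a b / b) * sin t).
Proof.
  destruct (billiard_roots_exist a b t hb hab) as (z1 & z2 & z3 & H & Ht).
  destruct (classic (center_defined h4 h4_dom (stretch a b z1) (stretch a b z2) (stretch a b z3)))
    as [hd|hd].
  - left. exists (stretch a b z1), (stretch a b z2), (stretch a b z3).
    split; [apply periodic_of_billiard_roots; auto|]. split; auto.
    rewrite (center4_billiard a b z1 z2 z3 hb hab H hd), Ht. reflexivity.
  - right. generalize (center4_billiard_undefined a b z1 z2 z3 hb hab H hd). rewrite Ht. auto.
Qed.

Lemma param_on_ellipse_cos_sq : exists c, forall t,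
  on_ellipse a b (- (k4 a b / a) * cos t, - (k4 a b / b) * sin t) -> cos t ^ 2 = c.
Proof.
  assert (hk := k4_pos a b hb hab).
  set (A := k4 a b / a^2). set (B := k4 a b / b^2).
  assert (hAB : A^2 - B^2 <> 0).
  { unfold A, B. intro E.
    assert (E' : k4 a b ^ 2 * ((b^2 - a^2) * (b^2 + a^2)) = 0).
    { transitivity (a^4 * b^4 * ((k4 a b / a^2)^2 - (k4 a b / b^2)^2)); [field; lra|].
      rewrite E. ring. }
    assert (b^2 < a^2) by nra.
    apply Rmult_integral in E' as [E'|E']; [revert E'; apply pow_nonzero; lra|].
    apply Rmult_integral in E' as [E'|E']; nra. }
  exists ((1 - B^2) / (A^2 - B^2)). intros t Ht. unfold on_ellipse in Ht; simpl in Ht.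
  assert (Ht' : A^2 * cos t ^ 2 + B^2 * sin t ^ 2 = 1) by (rewrite <- Ht; unfold A, B; field; lra).
  assert (E : (A^2 - B^2) * cos t ^ 2 = 1 - B^2).
  { rewrite <- Ht'. replace (sin t ^ 2) with (1 - cos t ^ 2); [ring|].
    generalize (sin2_cos2 t). unfold Rsqr. simpl. lra. }
  rewrite <- E. field. auto.
Qed.

Lemma exists_param_off_ellipse (t0 d : R) : 0 < d -> exists t, Rabs (t - t0) < d /\
  ~ on_ellipse a b (- (k4 a b / a) * cos t, - (k4 a b / b) * sin t).
Proof.
  intros hd. destruct param_on_ellipse_cos_sq as [c Hc].
  set (u := Rmin (d/3) (1/2)).
  assert (hu : 0 < u < 1) by (unfold u; split; [apply Rmin_glb_lt; lra|generalize (Rmin_r (d/3) (1/2)); lra]).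
  assert (hu3 : u <= d/3) by (unfold u; apply Rmin_l).
  destruct (classic (on_ellipse a b (- (k4 a b / a) * cos t0, - (k4 a b / b) * sin t0))) as [H0|H0];
    [|exists t0; split; auto; rewrite Rminus_diag_eq, Rabs_R0; auto].
  destruct (classic (on_ellipse a b (- (k4 a b / a) * cos (t0 + u), - (k4 a b / b) * sin (t0 + u))))
    as [H1|H1]; [|exists (t0 + u); split; auto; rewrite Rabs_right; lra].
  destruct (classic (on_ellipse a b
                       (- (k4 a b / a) * cos (t0 + 2*u), - (k4 a b / b) * sin (t0 + 2*u))))
    as [H2|H2]; [|exists (t0 + 2*u); split; auto; rewrite Rabs_right; lra].
  exfalso. apply (cos_sq_not_thrice t0 u hu); rewrite (Hc _ H0); symmetry; apply Hc; auto.
Qed.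

Lemma closure_locus4_iff (X : pt) :
  closure (locus h4 h4_dom a b) X <-> on_ellipse (k4 a b / a) (k4 a b / b) X.
Proof.
  assert (hk := k4_pos a b hb hab).
  assert (hA : k4 a b / a <> 0) by (apply Rgt_not_eq, Rdiv_lt_0_compat; lra).
  assert (hB : k4 a b / b <> 0) by (apply Rgt_not_eq, Rdiv_lt_0_compat; lra).
  split.
  - apply closure_ellipse; auto. exact locus4_on_ellipse.
  - intros HX eps he. apply on_ellipse_angle_iff in HX as [t0 ->]; auto.
    destruct (ellipse_param_continuous (k4 a b / a) (k4 a b / b) t0 eps he) as [d [hd Hd]].
    destruct (exists_param_off_ellipse t0 d hd) as [t [ht Hoff]].
    destruct (locus4_or_ellipse t) as [L|E]; [|contradiction].
    eexists. split; [exact L|auto].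
Qed.

End Loci.

Theorem theorem1 (a b : R) (hb : 0 < b) (hab : b < a) :
  (forall X : pt,
     closure (locus h4 h4_dom a b) X <->
     on_ellipse (k4 a b / a) (k4 a b / b) X) /\
  (forall X : pt,
     locus h10 h10_dom a b X <->
     on_ellipse (k10 a b / a) (k10 a b / b) X).
Proof.
  split; intro X; [apply closure_locus4_iff | apply locus10_iff]; auto.
Qed.
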